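(* Let $H$ be an inner product space over $\mathbb{K}\in\{\mathbb{R},\mathbb{C}\}$. Let $x,y\in H$ with $x\ne0$, $y\neq 0$, and let $a,b\in\mathbb{K}$ satisfy $$\operatorname{Re}\langle x-ay,\ by-x\rangle\ge 0 .$$ (a) If $\operatorname{Re}(a\bar b)>0$, then $$\|x\|^2\|y\|^2\le \frac14\,\frac{\big(\operatorname{Re}[(\bar a+\bar b)\langle x,y\rangle]\big)^2}{\operatorname{Re}(a\bar b)}\le \frac14\,\frac{|a+b|^2}{\operatorname{Re}(a\bar b)}\,|\langle x,y\rangle|^2 .$$ The constant $\tfrac14$ is best possible in both inequalities. That is, for every $l\in(0,\tfrac14)$ there exist $H$, nonzero $x,y\in H$ and $a,b\in\mathbb{K}$ with $\operatorname{Re}\langle x-ay,by-x\rangle\ge0$ and $\operatorname{Re}(a\bar b)>0$ for which $\|x\|^2\|y\|^2> l\,\frac{(\operatorname{Re}[(\bar a+\bar b)\langle x,y\rangle])^2}{\operatorname{Re}(a\bar b)}$. Likewise there exist such data for which $\|x\|^2\|y\|^2> l\,\frac{|a+b|^2}{\operatorname{Re}(a\bar b)}|\langle x,y\rangle|^2$. (b) If $\operatorname{Re}(a\bar b)=0$, then $$\|x\|^2\le \operatorname{Re}[(\bar a+\bar b)\langle x,y\rangle]\le |a+b|\,|\langle x,y\rangle| .$$ (c) If $\operatorname{Re}(a\bar b)<0$, then $$\|x\|^2\le \operatorname{Re}[(\bar a+\bar b)\langle x,y\rangle]-\operatorname{Re}(a\bar b)\|y\|^2\le |a+b|\,|\langle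 x,y\rangle|-\operatorname{Re}(a\bar b)\|y\|^2 .$$
   Context: The inner product $\langle\cdot,\cdot\rangle$ is linear in the first argument and conjugate-linear in the second. $\|u\|=\sqrt{\langle u,u\rangle}$ is the induced norm, and $\bar a$ denotes the complex conjugate of $a$ (equal to $a$ when $\mathbb{K}=\mathbb{R}$). *)

(* scalars K are a numFieldType equipped with a conjugation;
   instantiated with K = R (conj = id) and K = R[i] (conj = Num.conj),
   for R : realType (the real numbers). *)
From mathcomp Require Import all_boot all_order all_algebra all_reals.
From mathcomp Require Export complex.
Set Implicit Arguments. Unset Strict Implicit. Unset Printing Implicit Defensive.
Import Order.TTheory GRing.Theory Num.Theory.
Local Open Scope ring_scope.

Definition ReK (K : numFieldType) (conj : K -> K) (z : K) : K := (z + conj z) / 2.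

Definition is_inner_product (K : numFieldType) (conj : K -> K)
    (V : lmodType K) (ip : V -> V -> K) : Prop :=
  [/\ forall (c : K) (u v w : V), ip (c *: u + v) w = c * ip u w + ip v w,
      forall u v : V, ip v u = conj (ip u v),
      forall u : V, 0 <= ip u u
    & forall u : V, ip u u = 0 -> u = 0].

(* Note: ||u||^2 = <u,u> is written directly as [ip u u]. *)
Definition theorem2_for (K : numFieldType) (conj : K -> K) : Prop :=
  (forall (V : lmodType K) (ip : V -> V -> K), is_inner_product conj ip ->
   forall (x y : V) (a b : K), x != 0 -> y != 0 ->
   0 <= ReK conj (ip (x - a *: y) (b *: y - x)) ->
   let r := ReK conj (a * conj b) in
   let s := ReK conj ((conj a + conj b) * ip x y) in
   (0 < r ->
      ip x x * ip y y <= 4^-1 * s ^+ 2 / r /\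
      4^-1 * s ^+ 2 / r <= 4^-1 * (`|a + b| ^+ 2 / r) * `|ip x y| ^+ 2) /\
   (r = 0 -> ip x x <= s /\ s <= `|a + b| * `|ip x y|) /\
   (r < 0 -> ip x x <= s - r * ip y y /\
             s - r * ip y y <= `|a + b| * `|ip x y| - r * ip y y)) /\
  (forall l : K, 0 < l -> l < 4^-1 ->
    exists (V : lmodType K) (ip : V -> V -> K), is_inner_product conj ip /\
    exists (x y : V) (a b : K), [/\ x != 0, y != 0,
      0 <= ReK conj (ip (x - a *: y) (b *: y - x)),
      0 < ReK conj (a * conj b) &
      l * (ReK conj ((conj a + conj b) * ip x y)) ^+ 2 / ReK conj (a * conj b)
        < ip x x * ip y y]) /\
  (forall l : K, 0 < l -> l < 4^-1 ->
    exists (V : lmodType K) (ip : V -> V -> K), is_inner_product conj ip /\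
    exists (x y : V) (a b : K), [/\ x != 0, y != 0,
      0 <= ReK conj (ip (x - a *: y) (b *: y - x)),
      0 < ReK conj (a * conj b) &
      l * (`|a + b| ^+ 2 / ReK conj (a * conj b)) * `|ip x y| ^+ 2
        < ip x x * ip y y]).

From mathcomp Require Import all_boot all_order all_algebra all_reals.
From mathcomp Require Import complex ring.
Set Implicit Arguments. Unset Strict Implicit. Unset Printing Implicit Defensive.
Import Order.TTheory GRing.Theory Num.Theory.
Local Open Scope ring_scope.

(* Expanding the hypothesis gives ||x||^2 + r ||y||^2 <= s, where r = Re(a conj b)
   and s = Re[(conj a + conj b)<x,y>]. For r > 0 the AM-GM inequality
   4 r ||x||^2 ||y||^2 <= (||x||^2 + r ||y||^2)^2 turns this into the bound of (a);
   for r <= 0 it is (b) and (c) directly. The second inequality of each part is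
   Re z <= |z|. All bounds are attained by x = y = a = b = 1 in the scalar field
   itself, which gives sharpness of 1/4. *)

Lemma AMGM_mul_le_sqr_div4 (K : numFieldType) (u v r s : K) :
  0 <= u -> 0 <= v -> 0 < r -> u + r * v <= s -> u * v <= 4^-1 * s ^+ 2 / r.
Proof.
move=> u0 v0 r0 uvs; have rv0 : 0 <= r * v by rewrite mulr_ge0 // ltW.
rewrite ler_pdivlMr // [4^-1 * _]mulrC ler_pdivlMr ?ltr0n //.
have -> : u * v * r * 4%:R = (u + r * v) ^+ 2 - (u - r * v) ^+ 2 by ring.
apply: le_trans (_ : (u + r * v) ^+ 2 <= s ^+ 2).
  by rewrite gerBl -realEsqr realB // ger0_real.
by rewrite ler_pXn2r // nnegrE ?addr_ge0 // (le_trans _ uvs) ?addr_ge0.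
Qed.

Section ConjugationField.
Variables (K : numFieldType) (conj : {rmorphism K -> K}).
Hypothesis conjK : involutive conj.
Hypothesis ReK_real : forall z, ReK conj z \is Num.real.
Hypothesis norm_conj : forall z, `|conj z| = `|z|.

Local Notation Re := (ReK conj).

Lemma Re_id z : conj z = z -> Re z = z.
Proof. by move=> cz; rewrite /ReK cz; field. Qed.

Lemma Re_le_norm z : Re z <= `|z|.
Proof.
apply: le_trans (real_ler_norm (ReK_real z)) _.
rewrite /ReK normrM normfV [`|2|]ger0_norm ?ler0n // ler_pdivrMr ?ltr0n //.
by rewrite (le_trans (ler_normD _ _)) // norm_conj mulr_natr mulr2n.
Qed.

Section InnerProduct.
Variables (V : lmodType K) (ip : V -> V -> K).
Hypothesis ip_inner : is_inner_product conj ip.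

Let ipDZl : forall c u v w, ip (c *: u + v) w = c * ip u w + ip v w.
Proof. by case: ip_inner. Qed.
Let ip_sym : forall u v, ip v u = conj (ip u v).
Proof. by case: ip_inner. Qed.

Lemma ip0l w : ip 0 w = 0.
Proof.
have := ipDZl 1 0 0 w; rewrite scale1r addr0 mul1r => ip0D.
by apply: (addrI (ip 0 w)); rewrite -ip0D addr0.
Qed.

Lemma ipDl u v w : ip (u + v) w = ip u w + ip v w.
Proof. by rewrite -{1}[u]scale1r ipDZl mul1r. Qed.

Lemma ipZl c u w : ip (c *: u) w = c * ip u w.
Proof. by rewrite -[c *: u]addr0 ipDZl ip0l addr0. Qed.

Lemma ipNl u w : ip (- u) w = - ip u w.
Proof. by rewrite -scaleN1r ipZl mulN1r. Qed.

Lemma ipDr u v w : ip w (u + v) = ip w u + ip w v.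
Proof. by rewrite ip_sym ipDl rmorphD -!ip_sym. Qed.

Lemma ipZr c u w : ip w (c *: u) = conj c * ip w u.
Proof. by rewrite ip_sym ipZl rmorphM -ip_sym. Qed.

Lemma ipNr u w : ip w (- u) = - ip w u.
Proof. by rewrite -scaleN1r ipZr rmorphN1 mulN1r. Qed.

Lemma conj_ipxx u : conj (ip u u) = ip u u.
Proof. by rewrite -ip_sym. Qed.

Variables (x y : V) (a b : K).
Local Notation r := (Re (a * conj b)).
Local Notation s := (Re ((conj a + conj b) * ip x y)).

Lemma Re_ip_sub_scale :
  Re (ip (x - a *: y) (b *: y - x)) = s - ip x x - r * ip y y.
Proof.
rewrite ipDl ipNl ipZl !ipDr !ipNr !ipZr [ip y x]ip_sym.
rewrite /ReK !(rmorphD, rmorphN, rmorphM) !conjK !conj_ipxx; by field.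
Qed.

Hypothesis Re_ge0 : 0 <= Re (ip (x - a *: y) (b *: y - x)).

Lemma ipxx_add_Re_le : ip x x + r * ip y y <= s.
Proof. by move: Re_ge0; rewrite Re_ip_sub_scale subr_ge0 lerBrDr addrC. Qed.

Lemma Re_le_norm_ip : s <= `|a + b| * `|ip x y|.
Proof. by rewrite (le_trans (Re_le_norm _)) // normrM -rmorphD norm_conj. Qed.

Lemma ip_bounds_Re_gt0 : 0 < r ->
  ip x x * ip y y <= 4^-1 * s ^+ 2 / r /\
  4^-1 * s ^+ 2 / r <= 4^-1 * (`|a + b| ^+ 2 / r) * `|ip x y| ^+ 2.
Proof.
case: ip_inner => _ _ ip_ge0 _ r0; split.
  exact: AMGM_mul_le_sqr_div4 ipxx_add_Re_le.
have s0 : 0 <= s.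
  by apply: le_trans ipxx_add_Re_le; rewrite addr_ge0 // mulr_ge0 // ltW.
have -> : 4^-1 * (`|a + b| ^+ 2 / r) * `|ip x y| ^+ 2
          = 4^-1 * (`|a + b| * `|ip x y|) ^+ 2 / r by ring.
rewrite ler_pM2r ?invr_gt0 // ler_pM2l ?invr_gt0 ?ltr0n //.
by rewrite ler_pXn2r // ?nnegrE // ?mulr_ge0 // Re_le_norm_ip.
Qed.

Lemma ip_bounds_Re_eq0 : r = 0 -> ip x x <= s /\ s <= `|a + b| * `|ip x y|.
Proof.
by move=> r0; split; [move: ipxx_add_Re_le; rewrite r0 mul0r addr0 | exact: Re_le_norm_ip].
Qed.

Lemma ip_bounds_Re_lt0 : r < 0 ->
  ip x x <= s - r * ip y y /\
  s - r * ip y y <= `|a + b| * `|ip x y| - r * ip y y.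
Proof. by split; [rewrite lerBrDr; exact: ipxx_add_Re_le | rewrite lerD2r Re_le_norm_ip]. Qed.

End InnerProduct.

Hypothesis mul_conj_ge0 : forall z, 0 <= z * conj z.
Hypothesis mul_conj_eq0 : forall z, z * conj z = 0 -> z = 0.

Lemma scalar_inner_product : is_inner_product conj (fun u v : K^o => u * conj v).
Proof.
split=> [c u v w|u v|//|//]; first by rewrite mulrDl mulrA.
by rewrite rmorphM conjK mulrC.
Qed.

Lemma theorem2_for_conj : theorem2_for conj.
Proof.
split; first by move=> V ip ipP x y a b _ _ H; split; [|split];
  [exact: ip_bounds_Re_gt0 | exact: ip_bounds_Re_eq0 | exact: ip_bounds_Re_lt0].
have lt_quarter (l : K) : l < 4^-1 -> l * (1 + 1) ^+ 2 < 1.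
  by rewrite -[4^-1]div1r ltr_pdivlMr ?ltr0n // (_ : (1 + 1) ^+ 2 = 4) //; ring.
have norm2 : `|1 + 1 : K| = 1 + 1 by rewrite ger0_norm // addr_ge0.
split=> l _ /lt_quarter l4_lt1; exists K^o, (fun u v => u * conj v);
  (split; first exact: scalar_inner_product);
  exists 1, 1, 1, 1; rewrite !(rmorph1, mulr1, scale1r, subrr, mul0r).
all: rewrite !Re_id ?(rmorph0, rmorph1, rmorphD) //.
all: by split; rewrite ?oner_neq0 // divr1 ?norm2 ?normr1 ?expr1n ?mulr1.
Qed.
End ConjugationField.

Theorem theorem2 (R : realType) :
  theorem2_for (K := R) idfun /\ theorem2_for (K := R[i]) Num.conj.
Proof.
split; apply: theorem2_for_conj.
- by [].
- by move=> z; rewrite Re_id // num_real.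
- by [].
- by move=> z; rewrite -expr2 sqr_ge0.
- by move=> z /eqP; rewrite mulf_eq0 orbb => /eqP.
- exact: conjCK.
- by move=> z; rewrite /ReK -ReE Creal_Re.
- exact: norm_conjC.
- exact: mul_conjC_ge0.
- by move=> z /eqP; rewrite mul_conjC_eq0 => /eqP.
Qed.
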